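(* Consider rounds $t=1,\dots,T$ in which the allocation $a_t$ is the MMF output for entitlements $e$, where agent $i$'s reported demand is $d_{it}=\hat\rho_{it}v_{it}$ (with $\hat\rho_{it}\ge0$) and the other agents' reported demands are arbitrary. Write $\tilde a_{it}=a_{it}/v_{it}$. Then $\sum_{t=1}^T u_i(e_i/v_{it})-\sum_{t=1}^Tu_i(a_{it}/v_{it})\le\sum_{t=1}^T\mathbf{1}(\tilde a_{it}=\hat\rho_{it}\wedge\tilde a_{it}<\rho_i)\,\big(u_i(\rho_i)-u_i(\hat\rho_{it})\big).$
   Context: A divisible resource of size $1$ is shared by $n$ agents with entitlements $e_i>0$, $\sum_ie_i=1$. MMF$(e,d)$ on reported demands $d_1,\dots,d_n\ge0$: set $r=1$, $E=1$, $S=\{1,\dots,n\}$, $a=0$; process agents $j$ in ascending order of $d_j/e_j$; if $d_j<re_j/E$, set $a_j=d_j$, remove $j$ from $S$, $r\leftarrow r-d_j$, $E\leftarrow E-e_j$ and continue; otherwise set $a_k=re_k/E$ for all $k\in S$ and stop; output $a$. Agent $i$ has loads $v_{it}>0$, unit demand $\rho_i\ge0$ (true demand $v_{it}\rho_i$), and a utility $u_i$ of allocation per unit load that is non-decreasing, strictly increasing on $[0,\rho_i]$ and constant on $[\rho_i,\infty)$. *)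

From mathcomp Require Import all_boot all_order all_algebra.
Set Implicit Arguments. Unset Strict Implicit. Unset Printing Implicit Defensive.
Import Order.TTheory GRing.Theory Num.Theory.
Local Open Scope ring_scope.

Section MMF.
Variables (R : realFieldType) (n : nat).

(* One pass of the MMF loop over the (remaining) processing order [s],
   with remaining resource [r] and remaining entitlement mass [E]. *)
Fixpoint mmf_aux (e d : 'I_n -> R) (s : seq 'I_n) (r E : R) : 'I_n -> R :=
  match s with
  | [::] => fun _ => 0
  | j :: s' =>
      if d j < r * e j / E then
        fun k => if k == j then d j else mmf_aux e d s' (r - d j) (E - e j) k
      else
        fun k => if k \in s then r * e k / E else 0
  end.

(* Processing order: ascending d_j / e_j (stable sort of 0,...,n-1,
   so ties are broken by agent index). *)
Definition mmf_order (e d : 'I_n -> R) : seq 'I_n :=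
  sort (fun j k => d j / e j <= d k / e k) (enum 'I_n).

Definition MMF (e d : 'I_n -> R) : 'I_n -> R :=
  mmf_aux e d (mmf_order e d) 1 1.

End MMF.

From mathcomp Require Import all_boot all_order all_algebra.
From mathcomp Require Import lra.
Set Implicit Arguments. Unset Strict Implicit. Unset Printing Implicit Defensive.
Import Order.TTheory GRing.Theory Num.Theory.
Local Open Scope ring_scope.

(* MMF either meets agent i's reported demand or gives it at least its
   entitlement e_i: when the loop stops, the remaining resource r is at least
   the remaining entitlement mass E, so every remaining agent receives
   r e_k / E >= e_k.  In a round of the first kind the per-unit allocation is
   exactly the reported rho-hat, and the utility loss against e_i / v_i is at
   most u(rho) - u(rho-hat), which vanishes unless rho-hat < rho; in a round
   of the second kind there is no loss by monotonicity. *)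

Section MMFShare.
Variables (R : realFieldType) (n : nat) (e d : 'I_n -> R).
Hypothesis e_gt0 : forall j, 0 < e j.

(* The invariant [E <= r] holds because a served agent j takes
   d_j < r e_j / E <= r - E + e_j, the latter being
   (r - E)(E - e_j) >= 0 rearranged. *)
Lemma mmf_aux_demand_or_share (i : 'I_n) (s : seq 'I_n) (r E : R) :
  E = \sum_(k <- s) e k -> E <= r -> i \in s ->
  mmf_aux e d s r E i = d i \/ e i <= mmf_aux e d s r E i.
Proof.
elim: s r E => [|j s IH] r E //=.
rewrite big_cons => ->{E}; set S := \sum_(k <- s) e k => Er.
have S_ge0 : 0 <= S by apply: sumr_ge0 => k _; apply/ltW.
have ej := e_gt0 j.
have E_gt0 : 0 < e j + S by lra.
rewrite in_cons => i_in.
case: ifP => [/idP d_lt | _].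
  case: eqP => [-> | /eqP ij]; first by left.
  have i_in_s : i \in s by move: i_in; rewrite (negbTE ij).
  apply: IH => //; first by rewrite addrC addKr.
  have share_le : r * e j / (e j + S) <= r - (e j + S) + e j.
    rewrite ler_pdivrMr //.
    have : 0 <= (r - (e j + S)) * S by apply: mulr_ge0; lra.
    nra.
  lra.
right; rewrite in_cons i_in ler_pdivlMr //.
have := e_gt0 i; nra.
Qed.

Lemma MMF_demand_or_share (i : 'I_n) :
  \sum_(j < n) e j = 1 -> MMF e d i = d i \/ e i <= MMF e d i.
Proof.
move=> e_sum1; apply: mmf_aux_demand_or_share.
- by rewrite (perm_big _ (permEl (perm_sort _ _))) big_enum /= e_sum1.
- by rewrite lexx.
- by rewrite mem_sort mem_enum.
Qed.

End MMFShare.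

Section SatiatingUtility.
Variables (R : realFieldType) (rho : R) (u : R -> R).
Hypothesis u_mono : forall x y, 0 <= x -> x <= y -> u x <= u y.
Hypothesis u_const : forall x, rho <= x -> u x = u rho.

Lemma utility_le_sat (x : R) : 0 <= x -> u x <= u rho.
Proof.
move=> x_ge0; case: (lerP x rho) => [x_le | /ltW rho_le]; first exact: u_mono.
by rewrite u_const.
Qed.

Lemma utility_loss_le (x a rh : R) : 0 <= x -> 0 <= rh -> a = rh \/ x <= a ->
  u x - u a <= (if (a == rh) && (a < rho) then 1 else 0) * (u rho - u rh).
Proof.
move=> x_ge0 rh_ge0 [-> | x_le_a].
  have ux_le := utility_le_sat x_ge0.
  rewrite eqxx /=; case: ltP => [_ | rho_le]; first by rewrite mul1r; lra.
  by rewrite mul0r (u_const rho_le); lra.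
have ux_le : u x <= u a by exact: u_mono.
have loss_le0 : u x - u a <= 0 by lra.
apply: (le_trans loss_le0).
case: ifP => _; rewrite ?mul0r // mul1r subr_ge0.
exact: utility_le_sat.
Qed.

End SatiatingUtility.

Theorem lemma5 (R : realFieldType) (n T : nat)
    (e : 'I_n -> R) (he_pos : forall j, 0 < e j) (he_sum : \sum_(j < n) e j = 1)
    (i : 'I_n)
    (v : 'I_n -> 'I_T -> R) (hv : forall j t, 0 < v j t)
    (rho : R) (hrho : 0 <= rho)
    (u : R -> R)
    (hu_mono : forall x y, 0 <= x -> x <= y -> u x <= u y)
    (hu_strict : forall x y, 0 <= x -> x < y -> y <= rho -> u x < u y)
    (hu_const : forall x, rho <= x -> u x = u rho)
    (rhohat : 'I_T -> R) (hrhohat : forall t, 0 <= rhohat t)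
    (d : 'I_T -> 'I_n -> R) (hd : forall t j, 0 <= d t j)
    (hdi : forall t, d t i = rhohat t * v i t) :
  let a := fun t => MMF e (d t) in
  let at_ := fun t => a t i / v i t in
  \sum_(t < T) u (e i / v i t) - \sum_(t < T) u (at_ t)
  <= \sum_(t < T)
       (if (at_ t == rhohat t) && (at_ t < rho) then 1 else 0)
       * (u rho - u (rhohat t)).
Proof.
cbv zeta; rewrite -sumrB; apply: ler_sum => t _.
have v_gt0 := hv i t.
apply: utility_loss_le => //; first by rewrite divr_ge0 // ltW.
case: (MMF_demand_or_share (d t) he_pos i he_sum) => [-> | share_le].
  by left; rewrite hdi mulfK // gt_eqF.
by right; rewrite ler_pM2r // invr_gt0.
Qed.
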